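(* For every finite sequence of primes $p_1,\dots,p_h$ there is a finite solvable algebra $\mathbf A$ with a Malcev term such that $\mathsf{nuDet}_{p_1}\circ\cdots\circ\mathsf{nuDet}_{p_h}\subseteq\mathrm{nuP}_{\mathbf A}$.
   Context: A finite algebra has finite universe and finitely many basic operations. An $n$-ary circuit over $\mathbf A$ is a DAG with one output node, sources labelled by variables or constants from $A$, gates labelled by basic operations; size is nodes plus edges. A NuDFA over $\mathbf A$ is $(\{t_n\}_{n\ge1},\iota,S)$ with $t_n$ an $n$-ary circuit, $\iota:\{0,1\}\to A$, $S\subseteq A$, accepting $b\in\{0,1\}^n$ iff $t_n(\iota(b_1),\dots,\iota(b_n))\in S$; polynomial size means size of $t_n$ polynomial in $n$; $\mathrm{nuP}_{\mathbf A}$ is the class of languages over $\{0,1\}$ accepted by polynomial-size NuDFAs over $\mathbf A$. A Malcev term is a ternary term $d$ with $d(x,y,y)=d(y,y,x)=x$; solvability is in the sense of commutator theory. An ABP over $\mathrm{GF}(p)$ is a directed acyclic multigraph with one source and one sink, edges labelled by variables or constants of $\mathrm{GF}(p)$; it computes the sum over source–sink paths of the products of labels; size is vertices plus edges. A $\mathrm{BABP}_p$ gate is labelled by an ABP over $\mathrm{GF}(p)$ and $T\subseteq\mathrm{GF}(p)$ and outputs 1 on Boolean inputs iff the polynomial value lies in $T$; its size is the ABP's size. $\mathsf{nuDet}_{p_1}\circ\cdots\circ\mathsf{nuDet}_{p_h}$ is the class of languages $L$ such that for each $n$, $L\cap\{0,1\}^n$ is recognized by a layered circuit whose top layer is a single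 $\mathrm{BABP}_{p_1}$ gate, whose layer $i$ consists of $\mathrm{BABP}_{p_i}$ gates fed by layer $i+1$, and whose bottom layer of $\mathrm{BABP}_{p_h}$ gates reads the input bits, of total size (edges plus gate sizes) polynomial in $n$. *)

From HB Require Import structures.
From mathcomp Require Import all_boot all_order all_algebra.
Set Implicit Arguments. Unset Strict Implicit. Unset Printing Implicit Defensive.
Import GRing.Theory.

Record finAlgebra := FinAlgebra {
  carrier : finType;
  sym : finType;
  arity : sym -> nat;
  op : forall s : sym, (arity s).-tuple carrier -> carrier }.

Inductive term (A : finAlgebra) (V : Type) : Type :=
  | Var of V
  | App (s : sym A) of ('I_(arity s) -> term A V).

Fixpoint teval (A : finAlgebra) (V : Type) (env : V -> carrier A)
  (t : term A V) : carrier A :=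
  match t with
  | Var v => env v
  | App s f => op (mktuple (fun j => teval env (f j)))
  end.

Definition env3 (A : finAlgebra) (x y z : carrier A) : 'I_3 -> carrier A :=
  fun i => nth x [:: x; y; z] i.

Definition has_malcev (A : finAlgebra) : Prop :=
  exists d : term A 'I_3, forall x y : carrier A,
    teval (env3 x y y) d = x /\ teval (env3 y y x) d = x.

Definition is_congruence (A : finAlgebra) (r : carrier A -> carrier A -> Prop) :=
  [/\ (forall x, r x x), (forall x y, r x y -> r y x),
      (forall x y z, r x y -> r y z -> r x z) &
      (forall s (x y : (arity s).-tuple (carrier A)),
          (forall j, r (tnth x j) (tnth y j)) -> r (op x) (op y))].

Definition envs (T : Type) m k (a : 'I_m -> T) (c : 'I_k -> T) : 'I_m + 'I_k -> T :=
  fun v => match v with inl i => a i | inr j => c j end.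

Definition termcond (A : finAlgebra) (alpha beta delta : carrier A -> carrier A -> Prop) :=
  forall m k (t : term A ('I_m + 'I_k)) (a b : 'I_m -> carrier A)
         (c d : 'I_k -> carrier A),
    (forall i, alpha (a i) (b i)) -> (forall j, beta (c j) (d j)) ->
    delta (teval (envs a c) t) (teval (envs a d) t) ->
    delta (teval (envs b c) t) (teval (envs b d) t).

Definition commutator (A : finAlgebra) (alpha beta : carrier A -> carrier A -> Prop)
  (x y : carrier A) : Prop :=
  forall delta, is_congruence delta -> termcond alpha beta delta -> delta x y.

Fixpoint derived (A : finAlgebra) (k : nat) : carrier A -> carrier A -> Prop :=
  match k with
  | 0 => fun _ _ => True
  | k'.+1 => commutator (@derived A k') (@derived A k')
  end.

Definition solvable_alg (A : finAlgebra) : Prop :=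
  exists k, forall x y, @derived A k x y -> x = y.

(* Circuits over A: list of nodes in topological order, output = last. *)
Inductive cnode (A : finAlgebra) : Type :=
  | CIn of nat                         (* source labelled by variable x_i (0-based) *)
  | CConst of carrier A
  | CGate (s : sym A) of seq nat.      (* gate labelled by s, children (earlier nodes) *)

Definition cnode_ok (A : finAlgebra) (n k : nat) (nd : cnode A) : bool :=
  match nd with
  | CIn i => i < n
  | CConst _ => true
  | CGate s ch => (size ch == arity s) && all (fun c => c < k) ch
  end.

Definition circuit_wf (A : finAlgebra) (n : nat) (c : seq (cnode A)) : Prop :=
  0 < size c /\ forall k, k < size c -> cnode_ok n k (nth (CIn A 0) c k).

Definition cnode_edges (A : finAlgebra) (nd : cnode A) : nat :=
  match nd with CGate _ ch => size ch | _ => 0 end.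

Definition circuit_size (A : finAlgebra) (c : seq (cnode A)) : nat :=
  size c + \sum_(nd <- c) cnode_edges nd.

Definition cnode_val (A : finAlgebra) (d0 : carrier A) (x : seq (carrier A))
  (vals : seq (carrier A)) (nd : cnode A) : carrier A :=
  match nd with
  | CIn i => nth d0 x i
  | CConst a => a
  | CGate s ch => op (mktuple (fun j : 'I_(arity s) => nth d0 vals (nth 0 ch j)))
  end.

Definition circuit_eval (A : finAlgebra) (d0 : carrier A) (c : seq (cnode A))
  (x : seq (carrier A)) : carrier A :=
  last d0 (foldl (fun vals nd => rcons vals (cnode_val d0 x vals nd)) [::] c).

(* nuP_A: languages accepted by polynomial-size NuDFAs over A
   (constraint on all nonempty words). *)
Definition in_nuP (A : finAlgebra) (L : seq bool -> bool) : Prop :=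
  exists (t : nat -> seq (cnode A)) (iota : bool -> carrier A)
         (S : {set carrier A}) (e : nat),
    (forall n, 0 < n -> circuit_wf n (t n) /\ circuit_size (t n) <= e * n ^ e + e) /\
    (forall b : seq bool, 0 < size b ->
       L b = (circuit_eval (iota false) (t (size b)) (map iota b) \in S)).

Inductive label : Type :=
  | LVar of nat      (* the i-th input of the gate (0-based) *)
  | LConst of nat.   (* the constant c mod p of GF(p) *)

(* A BABP gate: ABP with vertices 0..nv-1 (source 0, sink nv-1), edges
   (u, v, label) with u < v < nv; accepting set T given by residues;
   wires: the gates of the next layer (or input bits) it reads. *)
Record babp := BABP {
  g_nv : nat;
  g_edges : seq (nat * nat * label);
  g_acc : seq nat;
  g_wires : seq nat }.

Definition label_ok (nvars : nat) (l : label) : bool :=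
  match l with LVar i => i < nvars | LConst _ => true end.

Definition babp_wf (g : babp) (below : nat) : bool :=
  [&& 0 < g_nv g,
      all (fun e : nat * nat * label =>
             [&& e.1.1 < e.1.2, e.1.2 < g_nv g & label_ok (size (g_wires g)) e.2])
          (g_edges g)
    & all (fun w => w < below) (g_wires g)].

Definition babp_size (g : babp) : nat := g_nv g + size (g_edges g).

Fixpoint abp_walk (sink u : nat) (es : seq (nat * nat * label)) : bool :=
  match es with
  | [::] => u == sink
  | e :: es' => (e.1.1 == u) && abp_walk sink e.1.2 es'
  end.

Definition label_val (p : nat) (xs : seq bool) (l : label) : 'F_p :=
  match l with
  | LVar i => ((nth false xs i)%:R)%R
  | LConst c => (c%:R)%R
  end.

(* Sum over source--sink paths (sequences of distinct-index edges) of
   the products of labels; every path has fewer than nv edges. *)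
Definition abp_value (p : nat) (g : babp) (xs : seq bool) : 'F_p :=
  let E := g_edges g in
  let e0 := (0, 0, LConst 0) in
  (\sum_(k < g_nv g)
    \sum_(t : k.-tuple 'I_(size E) |
            abp_walk (g_nv g).-1 0 [seq nth e0 E (val i) | i <- t])
       \prod_(i <- t) label_val p xs (nth e0 E (val i)).2)%R.

Definition babp_out (p : nat) (g : babp) (prev : seq bool) : bool :=
  let xs := [seq nth false prev w | w <- g_wires g] in
  abp_value p g xs \in [seq ((c%:R)%R : 'F_p) | c <- g_acc g].

(* Layered circuit: layers = [L_1; ...; L_h], L_1 top (single gate),
   L_h bottom (reads the input bits). *)
Definition layered_wf (ps : seq nat) (n : nat) (layers : seq (seq babp)) : Prop :=
  size layers = size ps /\ size (head [::] layers) = 1 /\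
  forall i, i < size layers ->
    let below := if i.+1 < size layers then size (nth [::] layers i.+1) else n in
    all (fun g => babp_wf g below) (nth [::] layers i).

Definition layered_size (layers : seq (seq babp)) : nat :=
  \sum_(L <- layers) \sum_(g <- L) (babp_size g + size (g_wires g)).

Definition layered_eval (ps : seq nat) (layers : seq (seq babp)) (b : seq bool) : bool :=
  nth false
    (foldr (fun pL prev => [seq babp_out pL.1 g prev | g <- pL.2]) b (zip ps layers))
    0.

Definition in_nuDet (ps : seq nat) (L : seq bool -> bool) : Prop :=
  exists (C : nat -> seq (seq babp)) (e : nat),
    forall n, layered_wf ps n (C n) /\ layered_size (C n) <= e * n ^ e + e /\
      forall b : seq bool, size b = n -> L b = layered_eval ps (C n) b.

From mathcomp Require Import all_boot all_order all_algebra ring zify.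
Set Implicit Arguments. Unset Strict Implicit. Unset Printing Implicit Defensive.
Import GRing.Theory.
Open Scope ring_scope.

(* Let M = p_1 ... p_h. The algebra has universe (Z/MZ)^(h+2), the Malcev
   operation x - y + z, the multiplications by constants, and for every
   T subset of Z/MZ the binary operation multiplying coordinate i of x by the
   bit [y_(i+1) \in T] (i <= h). Once the coordinates above i are fixed,
   coordinate i of every operation is affine in its arguments; hence the k-th
   term of the derived series is contained in the congruence "agreeing on the
   coordinates >= h + 2 - k", and the algebra is solvable.

   A layered circuit is simulated coordinatewise: the input bits live in
   coordinate h + 1 and the gates of layer i in coordinate i. The value of an
   ABP satisfies W(u) = [u = sink] + sum over edges u -> v of label * W(v);
   this is evaluated in Z/MZ vertex by vertex from the sink down, a variable
   label being realised by the bit operation reading the gate of the layer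
   below. Reducing mod p_i recovers the value over GF(p_i), so the accepting
   set of a gate is pulled back along Z/MZ -> GF(p_i). The resulting circuit
   has size quadratic in that of the layered circuit. *)

Lemma sum_tuple_cons (R : nmodType) (I : finType) k (P : pred (k.+1.-tuple I))
    (F : k.+1.-tuple I -> R) :
  \sum_(t : k.+1.-tuple I | P t) F t =
  \sum_(i : I) \sum_(t : k.-tuple I | P [tuple of i :: t]) F [tuple of i :: t].
Proof.
rewrite (pair_big_dep xpredT (fun i (t : k.-tuple I) => P [tuple of i :: t])
  (fun i (t : k.-tuple I) => F [tuple of i :: t])) /=.
rewrite (reindex (fun p : I * k.-tuple I => [tuple of p.1 :: p.2])) /=.
  by apply: eq_bigl => -[i t].
exists (fun t => (thead t, [tuple of behead t])) => [[i t] _|t _].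
  by congr pair; apply/val_inj.
by apply/val_inj; case: t => -[|a s].
Qed.

Lemma sum_tuple0 (R : nmodType) (I : finType) (P : pred (0.-tuple I))
    (F : 0.-tuple I -> R) :
  \sum_(t : 0.-tuple I | P t) F t = if P [tuple] then F [tuple] else 0.
Proof.
rewrite big_mkcond (big_pred1 [tuple]) // => t.
by rewrite [t]tuple0; apply/esym/eqP/val_inj.
Qed.

(** * Path sums of algebraic branching programs *)

Definition no_edge : nat * nat * label := (0%N, 0%N, LConst 0).

Definition label_value (R : nzRingType) (xs : seq bool) (l : label) : R :=
  match l with LVar i => (nth false xs i)%:R | LConst c => c%:R end.

Section PathSums.
Variables (R : nzRingType) (E : seq (nat * nat * label)) (xs : seq bool) (s : nat).

Local Notation edge i := (nth no_edge E i).
Local Notation weight i := (label_value R xs (edge i).2).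

(* [abp_value p g xs] is [walk_sum] over [GF(p)] with [s = (g_nv g).-1],
   [n = g_nv g] and [u = 0]. *)
Definition walk_sum (n u : nat) : R :=
  \sum_(k < n) \sum_(t : k.-tuple 'I_(size E) | abp_walk s u [seq edge (val i) | i <- t])
    \prod_(i <- t) weight (val i).

Fixpoint walk_weight (n u : nat) : R :=
  if n is n'.+1 then
    (u == s)%:R + \sum_(i < size E | (edge i).1.1 == u) weight i * walk_weight n' (edge i).1.2
  else 0.

Lemma walk_sumE n u : walk_sum n u = walk_weight n u.
Proof.
elim: n u => [|n IH] u; first by rewrite /walk_sum big_ord0.
rewrite /walk_sum big_ord_recl /=; congr (_ + _).
  by rewrite sum_tuple0 /= big_nil; case: (u == s).
under eq_bigr => k _ do rewrite sum_tuple_cons /=.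
rewrite exchange_big /= [RHS]big_mkcond /=; apply: eq_bigr => i _.
case: ((edge i).1.1 =P u) => [_|ne]; last first.
  by rewrite big1 // => k _; rewrite big1 // => t /andP[/eqP].
rewrite -IH /walk_sum mulr_sumr; apply: eq_bigr => k _.
by rewrite mulr_sumr; apply: eq_bigr => t _; rewrite big_cons.
Qed.

Hypothesis edges_forward : forall i, (i < size E)%N ->
  ((edge i).1.1 < (edge i).1.2)%N /\ ((edge i).1.2 <= s)%N.

(* Walks strictly increase the vertex, so [s - u + 1] units of fuel suffice. *)
Lemma walk_weight_fuel n m u :
  (s - u < n)%N -> (s - u < m)%N -> walk_weight n u = walk_weight m u.
Proof.
elim: n m u => [|n IH] [|m] u //= hn hm; congr (_ + _); apply: eq_bigr => i /eqP hi.
have [h1 h2] := edges_forward (ltn_ord i); rewrite hi in h1.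
by congr (_ * _); apply: IH; lia.
Qed.

End PathSums.

(** * Reduction from [Z/MZ] to [GF(p)] *)

Section ZpToFp.
Variables (M p : nat).
Hypotheses (p_prime : prime p) (p_dvd_M : (p %| M)%N) (M_gt1 : (1 < M)%N).

Definition Zp_to_Fp (z : 'Z_M) : 'F_p := (val z)%:R.

Lemma Zp_to_Fp_nat k : Zp_to_Fp k%:R = k%:R.
Proof.
rewrite /Zp_to_Fp /= val_Zp_nat // {2}(divn_eq k M) natrD natrM.
by move: p_dvd_M => /dvdnP[q ->]; rewrite natrM pchar_Fp_0 // !mulr0 add0r.
Qed.

Lemma Zp_nat_val (z : 'Z_M) : z = (val z)%:R.
Proof.
apply: val_inj; rewrite /= val_Zp_nat // modn_small //.
by have := ltn_ord z; move: (nat_of_ord z) => k; rewrite (Zp_cast M_gt1).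
Qed.

Lemma Zp_to_Fp0 : Zp_to_Fp 0 = 0.
Proof. exact: (Zp_to_Fp_nat 0). Qed.

Lemma Zp_to_FpD a b : Zp_to_Fp (a + b) = Zp_to_Fp a + Zp_to_Fp b.
Proof. by rewrite (Zp_nat_val a) (Zp_nat_val b) -natrD !Zp_to_Fp_nat natrD. Qed.

Lemma Zp_to_FpM a b : Zp_to_Fp (a * b) = Zp_to_Fp a * Zp_to_Fp b.
Proof. by rewrite (Zp_nat_val a) (Zp_nat_val b) -natrM !Zp_to_Fp_nat natrM. Qed.

Lemma Zp_to_Fp_walk_weight E xs s n u :
  Zp_to_Fp (walk_weight _ E xs s n u) = walk_weight _ E xs s n u.
Proof.
elim: n u => [|n IH] u /=; first exact: Zp_to_Fp0.
rewrite Zp_to_FpD Zp_to_Fp_nat (big_morph Zp_to_Fp Zp_to_FpD Zp_to_Fp0).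
congr (_ + _); apply: eq_bigr => i _; rewrite Zp_to_FpM IH.
by case: (nth no_edge E i).2 => k /=; rewrite Zp_to_Fp_nat.
Qed.

End ZpToFp.

(** * A solvable Malcev algebra on [(Z/MZ)^(h+2)] *)

Lemma affine_combination (R : comNzRingType) (a0 a1 a2 b0 b1 b2 c0 c1 c2 d0 d1 d2 : R) :
  a0 - b0 - c0 + d0 = 0 -> a1 - b1 - c1 + d1 = 0 -> a2 - b2 - c2 + d2 = 0 ->
  (a0 - a1 + a2) - (b0 - b1 + b2) - (c0 - c1 + c2) + (d0 - d1 + d2) = 0.
Proof.
move=> h0 h1 h2.
have -> : (a0 - a1 + a2) - (b0 - b1 + b2) - (c0 - c1 + c2) + (d0 - d1 + d2) =
  (a0 - b0 - c0 + d0) - (a1 - b1 - c1 + d1) + (a2 - b2 - c2 + d2) by ring.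
by rewrite h0 h1 h2 subrr add0r.
Qed.

Section LayeredAlgebra.
Variables (h M : nat).

Definition lvec : finType := {ffun 'I_h.+2 -> 'Z_M}.

(* [None] is the Malcev operation [x - y + z]; [inl c] scales by [c];
   [inr T] is the binary [test_mul T]. *)
Definition lsym : finType := option ('Z_M + {set 'Z_M}).

Definition lsym_arity (s : lsym) : nat :=
  match s with None => 3 | Some (inl _) => 1 | Some (inr _) => 2 end.

Definition test_mul (T : {set 'Z_M}) (x y : lvec) : lvec :=
  [ffun i : 'I_h.+2 => if (i < h.+1)%N then x i * (y (inord i.+1) \in T)%:R else x i].

Definition lop (s : lsym) : (lsym_arity s).-tuple lvec -> lvec :=
  match s as s0 return (lsym_arity s0).-tuple lvec -> lvec with
  | None => fun t => [ffun i => tnth t ord0 i - tnth t (inord 1) i + tnth t (inord 2) i]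
  | Some (inl c) => fun t => [ffun i => c * tnth t ord0 i]
  | Some (inr T) => fun t => test_mul T (tnth t ord0) (tnth t (inord 1))
  end.

Definition layered_alg : finAlgebra := @FinAlgebra lvec lsym lsym_arity lop.

Lemma layered_alg_malcev : has_malcev layered_alg.
Proof.
exists (@App layered_alg _ (None : lsym) (fun j => Var _ j)) => x y /=.
split; apply/ffunP => i; rewrite ffunE !tnth_mktuple /env3 /= !inordK //.
- by rewrite subrK.
- by rewrite subrr add0r.
Qed.

Definition agree_above (j : nat) (x y : lvec) := forall i : 'I_h.+2, (j <= i)%N -> x i = y i.

(* The identity [t(a,c) - t(a,d) - t(b,c) + t(b,d) = 0] at coordinate [i]
   yields the term condition there. *)
Definition affine_at (i : 'I_h.+2) (x y z w : lvec) := x i - y i - z i + w i = 0.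

Lemma agree_above_le j j' x y : (j <= j')%N -> agree_above j x y -> agree_above j' x y.
Proof. by move=> le H i ji; apply: H; apply: leq_trans ji. Qed.

Lemma lop_agree_above (s : lsym) j (X Y : (lsym_arity s).-tuple lvec) :
  (forall k, agree_above j (tnth X k) (tnth Y k)) -> agree_above j (lop X) (lop Y).
Proof.
case: s X Y => [[c|T]|] X Y H i ji /=; rewrite ?ffunE.
- by rewrite (H ord0 i ji).
- rewrite (H ord0 i ji); case: ifP => // lt.
  by rewrite (H (inord 1) (inord i.+1)) // inordK // leqW.
- by rewrite (H ord0 i ji) (H (inord 1) i ji) (H (inord 2) i ji).
Qed.

Lemma lop_affine_at (s : lsym) (i : 'I_h.+2) (X Y Z W : (lsym_arity s).-tuple lvec) :
  (forall k, [/\ agree_above i.+1 (tnth X k) (tnth Y k),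
      agree_above i.+1 (tnth X k) (tnth Z k) & agree_above i.+1 (tnth X k) (tnth W k)]) ->
  (forall k, affine_at i (tnth X k) (tnth Y k) (tnth Z k) (tnth W k)) ->
  affine_at i (lop X) (lop Y) (lop Z) (lop W).
Proof.
rewrite /affine_at; case: s X Y Z W => [[c|T]|] X Y Z W Ha Hp /=; rewrite ?ffunE.
- by rewrite -!mulrBr -mulrDr (Hp ord0) mulr0.
- case: ifP => // lt.
  have [h1 h2 h3] := Ha (inord 1).
  have e : (i.+1 <= (inord i.+1 : 'I_h.+2))%N by rewrite inordK.
  rewrite -(h1 _ e) -(h2 _ e) -(h3 _ e).
  by rewrite -!mulrBl -mulrDl (Hp ord0) mul0r.
- exact: affine_combination (Hp ord0) (Hp (inord 1)) (Hp (inord 2)).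
Qed.

Lemma teval_agree_above V (t : term layered_alg V) j (e1 e2 : V -> carrier layered_alg) :
  (forall v, agree_above j (e1 v) (e2 v)) -> agree_above j (teval e1 t) (teval e2 t).
Proof.
move=> He; elim: t => [v|s f IH] /=; first exact: He.
by apply: lop_agree_above => k; rewrite !tnth_mktuple; apply: IH.
Qed.

Lemma teval_affine_at V (t : term layered_alg V) (i : 'I_h.+2) (e1 e2 e3 e4 : V -> carrier layered_alg) :
  (forall v, [/\ agree_above i.+1 (e1 v) (e2 v), agree_above i.+1 (e1 v) (e3 v)
      & agree_above i.+1 (e1 v) (e4 v)]) ->
  (forall v, affine_at i (e1 v) (e2 v) (e3 v) (e4 v)) ->
  affine_at i (teval e1 t) (teval e2 t) (teval e3 t) (teval e4 t).
Proof.
move=> Ha Hp; elim: t => [v|s f IH] /=; first exact: Hp.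
apply: lop_affine_at => k; rewrite !tnth_mktuple //.
by split; apply: teval_agree_above => v; case: (Ha v).
Qed.

Lemma agree_above_congruence j : @is_congruence layered_alg (agree_above j).
Proof.
split=> [//|x y H i ji|x y z H1 H2 i ji|s x y]; first by rewrite H.
  by rewrite H1 // H2.
exact: lop_agree_above.
Qed.

Lemma termcond_agree_above j :
  @termcond layered_alg (agree_above j.+1) (agree_above j.+1) (agree_above j).
Proof.
move=> m k t a b c d Hab Hcd H i ji.
have [ij|ij] := ltnP j i.
  by apply: (@teval_agree_above _ t j.+1) => // -[v|v] /=; [|apply: Hcd].
have ei : nat_of_ord i = j by apply/eqP; rewrite eqn_leq ij ji.
have : affine_at i (teval (envs a c) t) (teval (envs a d) t)
                   (teval (envs b c) t) (teval (envs b d) t).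
  apply: teval_affine_at => -[v|v] /=; rewrite ?ei.
  - by split => //; apply: Hab.
  - by split => //; apply: Hcd.
  - by rewrite /affine_at subrr sub0r addrC subrr.
  - by rewrite /affine_at [_ - _ - _]addrAC subrr sub0r addrC subrr.
rewrite /affine_at (H i ji) subrr sub0r => /eqP; rewrite addrC subr_eq0.
by move/eqP.
Qed.

Lemma derived_agree_above k x y : @derived layered_alg k x y -> agree_above (h.+2 - k) x y.
Proof.
elim: k x y => [|k IH] x y /=; first by move=> _ i; rewrite leqNgt ltn_ord.
move=> H; apply: H; first exact: agree_above_congruence.
have le : (h.+2 - k <= (h.+2 - k.+1).+1)%N by rewrite subnS leqSpred.
move=> m n' t a b c d Hab Hcd; apply: termcond_agree_above => i.
  by apply: agree_above_le le _; apply: IH.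
by apply: agree_above_le le _; apply: IH.
Qed.

Lemma layered_alg_solvable : solvable_alg layered_alg.
Proof.
exists h.+2 => x y /derived_agree_above; rewrite subnn => H.
by apply/ffunP => i; apply: H.
Qed.

End LayeredAlgebra.

(** * Evaluating circuits node by node *)

Section CircuitValues.
Variables (A : finAlgebra) (d0 : carrier A) (x : seq (carrier A)).
Implicit Types (c t : seq (cnode A)) (nd : cnode A).

Definition circuit_vals c : seq (carrier A) :=
  foldl (fun vs nd => rcons vs (cnode_val d0 x vs nd)) [::] c.

Definition node_value c k : carrier A := nth d0 (circuit_vals c) k.

Definition extends c c' := exists t, c' = c ++ t.

Definition nodes_ok n c := forall k, (k < size c)%N -> cnode_ok n k (nth (CIn A 0) c k).

Lemma circuit_vals_rcons c nd :
  circuit_vals (rcons c nd) = rcons (circuit_vals c) (cnode_val d0 x (circuit_vals c) nd).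
Proof. by rewrite /circuit_vals -cats1 foldl_cat. Qed.

Lemma size_circuit_vals c : size (circuit_vals c) = size c.
Proof. by elim/last_ind: c => [|c nd IH] //; rewrite circuit_vals_rcons !size_rcons IH. Qed.

Lemma circuit_vals_cat c t : exists r, circuit_vals (c ++ t) = circuit_vals c ++ r.
Proof.
elim/last_ind: t => [|t nd [r IH]]; first by exists [::]; rewrite !cats0.
exists (rcons r (cnode_val d0 x (circuit_vals (c ++ t)) nd)).
by rewrite -rcons_cat circuit_vals_rcons {1}IH rcons_cat.
Qed.

Lemma node_value_extend c c' k : extends c c' -> (k < size c)%N ->
  node_value c' k = node_value c k.
Proof.
move=> [t ->] lt; rewrite /node_value; have [r ->] := circuit_vals_cat c t.
by rewrite nth_cat size_circuit_vals lt.
Qed.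

Lemma node_value_last c nd :
  node_value (rcons c nd) (size c) = cnode_val d0 x (circuit_vals c) nd.
Proof. by rewrite /node_value circuit_vals_rcons nth_rcons size_circuit_vals ltnn eqxx. Qed.

Lemma circuit_evalE c : circuit_eval d0 c x = node_value c (size c).-1.
Proof. by rewrite /node_value -(size_circuit_vals c) nth_last. Qed.

Lemma extends_refl c : extends c c.
Proof. by exists [::]; rewrite cats0. Qed.

Lemma extends_trans c1 c2 c3 : extends c1 c2 -> extends c2 c3 -> extends c1 c3.
Proof. by move=> [t1 ->] [t2 ->]; exists (t1 ++ t2); rewrite catA. Qed.

Lemma extends_rcons c nd : extends c (rcons c nd).
Proof. by exists [:: nd]; rewrite cats1. Qed.

Lemma size_extends c c' : extends c c' -> (size c <= size c')%N.
Proof. by move=> [t ->]; rewrite size_cat leq_addr. Qed.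

Lemma nodes_ok_rcons n c nd : nodes_ok n c -> cnode_ok n (size c) nd -> nodes_ok n (rcons c nd).
Proof.
move=> H Hn k; rewrite size_rcons ltnS leq_eqVlt nth_rcons => /orP[/eqP->|lt].
  by rewrite ltnn eqxx.
by rewrite lt; apply: H.
Qed.

Definition source_value nd : carrier A :=
  match nd with CIn i => nth d0 x i | CConst a => a | CGate _ _ => d0 end.

Lemma circuit_vals_sources c : all (fun nd => if nd is CGate _ _ then false else true) c ->
  circuit_vals c = map source_value c.
Proof.
elim/last_ind: c => [|c nd IH] //; rewrite all_rcons => /andP[h1 h2].
by rewrite circuit_vals_rcons IH // map_rcons; case: nd h1.
Qed.

End CircuitValues.

(** * Compiling layered BABP circuits into circuits over the algebra *)

Section Compile.
Variables (h M : nat).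
Local Notation A := (layered_alg h M).
Local Notation node := (cnode A).
Local Notation edge E i := (nth no_edge E i).

Definition const_vec (a : 'Z_M) : carrier A := [ffun _ => a].
Definition malcev_sym : sym A := None.
Definition scale_sym (a : 'Z_M) : sym A := Some (inl a).
Definition test_sym (T : {set 'Z_M}) : sym A := Some (inr T).

Variable x : seq (carrier A).
Local Notation value := (node_value (const_vec 0) x).
Local Notation extends := (@extends A).

Lemma test_mulE T (y z : lvec h M) l : (l < h.+1)%N ->
  test_mul T y z (inord l) = y (inord l) * (z (inord l.+1) \in T)%:R.
Proof. by move=> lt; rewrite /test_mul ffunE inordK ?lt // leqW. Qed.

Lemma value_scale c a k :
  value (rcons c (CGate (scale_sym a) [:: k])) (size c) = [ffun i => a * value c k i].
Proof. by rewrite node_value_last; apply/ffunP => i; rewrite !ffunE tnth_mktuple. Qed.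

Lemma value_test c T k k' :
  value (rcons c (CGate (test_sym T) [:: k; k'])) (size c) = test_mul T (value c k) (value c k').
Proof. by rewrite node_value_last /= !tnth_mktuple /= inordK. Qed.

Lemma value_malcev c k k' k'' :
  value (rcons c (CGate malcev_sym [:: k; k'; k''])) (size c) =
  [ffun i => value c k i - value c k' i + value c k'' i].
Proof.
by rewrite node_value_last; apply/ffunP => i; rewrite /= !ffunE !tnth_mktuple /= !inordK.
Qed.

Lemma value_extend c c' k : extends c c' -> (k < size c)%N -> value c' k = value c k.
Proof. exact: node_value_extend. Qed.

Definition node_at c k l (a : 'Z_M) := (k < size c)%N /\ value c k (inord l) = a.

Definition node_tests c k l (T : {set 'Z_M}) (b : bool) :=
  (k < size c)%N /\ (value c k (inord l) \in T) = b.

Definition const_nodes c zero one :=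
  [/\ (zero < size c)%N, (one < size c)%N, value c zero = const_vec 0 & value c one = const_vec 1].

Definition encodes c src Ts l (bits : seq bool) :=
  forall k, (k < size bits)%N -> node_tests c (nth 0%N src k) l (nth set0 Ts k) (nth false bits k).

Lemma node_at_extend c c' k l a : extends c c' -> node_at c k l a -> node_at c' k l a.
Proof.
move=> ext [lt <-]; rewrite /node_at (value_extend ext) //.
by split=> //; apply: leq_trans lt (size_extends ext).
Qed.

Lemma node_tests_extend c c' k l T b : extends c c' -> node_tests c k l T b -> node_tests c' k l T b.
Proof.
move=> ext [lt <-]; rewrite /node_tests (value_extend ext) //.
by split=> //; apply: leq_trans lt (size_extends ext).
Qed.

Lemma const_nodes_extend c c' zero one : extends c c' ->
  const_nodes c zero one -> const_nodes c' zero one.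
Proof.
move=> ext [z1 o1 z2 o2]; have le := size_extends ext.
by split; rewrite ?(value_extend ext) //; apply: leq_trans le.
Qed.

Lemma encodes_extend c c' src Ts l bits : extends c c' ->
  encodes c src Ts l bits -> encodes c' src Ts l bits.
Proof. by move=> ext H k hk; apply: node_tests_extend ext (H k hk). Qed.

Lemma const_nodes_at c zero one l :
  const_nodes c zero one -> node_at c zero l 0 /\ node_at c one l 1.
Proof. by case=> z1 o1 z2 o2; rewrite /node_at z2 o2 !ffunE. Qed.

Section OutEdges.
Variables (E : seq (nat * nat * label)) (u : nat) (vnode wnode : nat -> nat)
  (wset : nat -> {set 'Z_M}) (zero : nat).

Definition edge_node (e : nat * nat * label) : node :=
  match e.2 with
  | LConst q => CGate (scale_sym q%:R) [:: vnode e.1.2]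
  | LVar w => CGate (test_sym (wset w)) [:: vnode e.1.2; wnode w]
  end.

(* The term [label * value of target] of edge [i] is added to the
   accumulator node [acc] as [acc - zero + term]. *)
Definition add_edge (c : seq node) (acc i : nat) : seq node :=
  rcons (rcons c (edge_node (edge E i))) (CGate malcev_sym [:: acc; zero; size c]).

Fixpoint compile_out_edges (c : seq node) (acc : nat) (es : seq nat) : seq node * nat :=
  if es is i :: es' then
    if (edge E i).1.1 == u then compile_out_edges (add_edge c acc i) (size c).+1 es'
    else compile_out_edges c acc es'
  else (c, acc).

Variables (n l : nat) (xs : seq bool) (W : nat -> 'Z_M).
Hypothesis l_lt : (l < h.+1)%N.

Definition edge_ready c i :=
  node_at c (vnode (edge E i).1.2) l (W (edge E i).1.2) /\
  if (edge E i).2 is LVar w then node_tests c (wnode w) l.+1 (wset w) (nth false xs w)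
  else True.

Lemma edge_ready_extend c c' i : extends c c' -> edge_ready c i -> edge_ready c' i.
Proof.
move=> ext [h1 h2]; split; first exact: node_at_extend h1.
by case: (edge E i).2 h2 => // w; apply: node_tests_extend.
Qed.

Lemma compile_edge c acc a i :
  nodes_ok n c -> node_at c zero l 0 -> node_at c acc l a -> edge_ready c i ->
  [/\ extends c (add_edge c acc i), nodes_ok n (add_edge c acc i),
      size (add_edge c acc i) = (size c).+2 &
      node_at (add_edge c acc i) (size c).+1 l
        (a + label_value _ xs (edge E i).2 * W (edge E i).1.2)].
Proof.
move=> ok [z1 z2] [a1 a2] [[v1 v2] hw]; rewrite /add_edge.
set c1 := rcons c _; set c2 := rcons c1 _.
have ext1 : extends c c1 := extends_rcons _ _.
have ext2 : extends c c2 := extends_trans ext1 (extends_rcons _ _).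
have sc1 : size c1 = (size c).+1 by rewrite size_rcons.
split=> //; last split.
- apply: nodes_ok_rcons; first apply: nodes_ok_rcons => //.
    rewrite /edge_node; case: (edge E i).2 hw => [w [w1 _]|q _] /=;
    by rewrite ?andbT ?v1 ?w1.
  by rewrite /= sc1 ltnS (ltnW a1) ltnS (ltnW z1) ltnSn.
- by rewrite !size_rcons.
- by rewrite /c2 !size_rcons.
rewrite -sc1 value_malcev ffunE (value_extend ext1 a1) (value_extend ext1 z1) z2 a2 subr0.
congr (_ + _).
rewrite /c1 /edge_node; case: (edge E i).2 hw => [w [w1 w2]|q _].
  by rewrite value_test test_mulE // v2 w2 mulrC.
by rewrite value_scale ffunE v2.
Qed.

Lemma compile_out_edges_spec es c acc a :
  nodes_ok n c -> node_at c zero l 0 -> node_at c acc l a ->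
  (forall i, i \in es -> (edge E i).1.1 == u -> edge_ready c i) ->
  let r := compile_out_edges c acc es in
  [/\ extends c r.1, nodes_ok n r.1,
      node_at r.1 r.2 l (a + \sum_(i <- es | (edge E i).1.1 == u)
                               label_value _ xs (edge E i).2 * W (edge E i).1.2)
    & (size r.1 <= size c + 2 * size es)%N].
Proof.
elim: es c acc a => [|i es IH] c acc a ok z ha ready /=.
  by rewrite big_nil addr0 addn0; split=> //; apply: extends_refl.
have ready' j : j \in es -> (edge E j).1.1 == u -> edge_ready c j.
  by move=> hj; apply: ready; rewrite inE hj orbT.
rewrite big_cons; case: ifP => hu; last first.
  have [ext ok1 v1 sz1] := IH c acc a ok z ha ready'; split => //.
  by apply: leq_trans sz1 _; rewrite leq_add2l leq_mul2l ltnW.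
have [ext ok2 sz2 v2] := compile_edge ok z ha (ready i (mem_head _ _) hu).
have [ext' ok3 v3 sz3] := IH _ _ _ ok2 (node_at_extend ext z) v2
  (fun j hj hj' => edge_ready_extend ext (ready' j hj hj')).
split=> //; first exact: extends_trans ext ext'.
  by rewrite addrA.
by apply: leq_trans sz3 _; rewrite sz2 mulnS addnA addn2.
Qed.

End OutEdges.

Section Vertices.
Variables (E : seq (nat * nat * label)) (s : nat) (wnode : nat -> nat)
  (wset : nat -> {set 'Z_M}) (zero one : nat).

(* Vertices are compiled from the sink [s] downwards; [vnode v] is the node
   holding the weight of the walks from [v] to [s]. *)
Fixpoint compile_vertices (k : nat) (c : seq node) (vnode : nat -> nat) :
    seq node * (nat -> nat) :=
  if k is k'.+1 then
    let r := compile_out_edges E k' vnode wnode wset zero c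
               (if k' == s then one else zero) (iota 0 (size E)) in
    compile_vertices k' r.1 (fun v => if v == k' then r.2 else vnode v)
  else (c, vnode).

Variables (n l nw : nat) (xs : seq bool) (c0 : seq node).
Hypothesis l_lt : (l < h.+1)%N.
Hypothesis edges_ok : forall i, (i < size E)%N ->
  [/\ ((edge E i).1.1 < (edge E i).1.2)%N, ((edge E i).1.2 <= s)%N &
      if (edge E i).2 is LVar w then (w < nw)%N else True].
Hypothesis wires_read : forall w, (w < nw)%N ->
  node_tests c0 (wnode w) l.+1 (wset w) (nth false xs w).
Hypothesis consts : const_nodes c0 zero one.

Local Notation V := (walk_weight _ E xs s s.+1 : nat -> 'Z_M).

Lemma walk_weight_rec u : (u <= s)%N ->
  V u = (u == s)%:R + \sum_(i <- iota 0 (size E) | (edge E i).1.1 == u)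
     label_value _ xs (edge E i).2 * V (edge E i).1.2.
Proof.
move=> us; rewrite [LHS]/=; congr (_ + _).
have -> : iota 0 (size E) = index_iota 0 (size E) by rewrite /index_iota subn0.
rewrite big_mkord.
apply: eq_bigr => i /eqP hi; congr (_ * _).
have [h1 h2 _] := edges_ok (ltn_ord i).
apply: walk_weight_fuel; [|lia|lia].
by move=> j hj; have [] := edges_ok hj.
Qed.

Lemma compile_vertices_spec k c vnode : (k <= s.+1)%N -> extends c0 c -> nodes_ok n c ->
  (forall v, (k <= v <= s)%N -> node_at c (vnode v) l (V v)) ->
  let r := compile_vertices k c vnode in
  [/\ extends c r.1, nodes_ok n r.1,
      (forall v, (v <= s)%N -> node_at r.1 (r.2 v) l (V v))
    & (size r.1 <= size c + k * (2 * size E))%N].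
Proof.
elim: k c vnode => [|k IH] c vnode ks ext0 ok0 Hv /=.
  by rewrite addn0; split=> //; apply: extends_refl.
have [[z1 z2] [o1 o2]] := const_nodes_at l (const_nodes_extend ext0 consts).
set acc := if k == s then one else zero.
have hacc : node_at c acc l (k == s)%:R by rewrite /acc; case: (k == s).
have ready i : i \in iota 0 (size E) -> (edge E i).1.1 == k ->
    edge_ready E vnode wnode wset l xs V c i.
  rewrite mem_iota add0n => /andP[_ hi] /eqP hu.
  have [h1 h2 h3] := edges_ok hi; rewrite hu in h1.
  split; first by apply: Hv; rewrite h1.
  case: (edge E i).2 h3 => // w hw; exact: node_tests_extend ext0 (wires_read hw).
have [ext1 ok1 v1 sz1] := compile_out_edges_spec l_lt ok0 (conj z1 z2) hacc ready.
set r := compile_out_edges _ _ _ _ _ _ _ _ _ in ext1 ok1 v1 sz1 *.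
rewrite -walk_weight_rec ?(ltnW ks) // in v1.
have [|||ext2 ok2 v2 sz2] := IH r.1 (fun v => if v == k then r.2 else vnode v) (ltnW ks).
- exact: extends_trans ext0 ext1.
- exact: ok1.
- move=> v /andP[kv vs]; case: eqP => [->|/eqP ne] //.
  by apply: node_at_extend ext1 _; apply: Hv; rewrite ltn_neqAle eq_sym ne kv.
split=> //; first exact: extends_trans ext1 ext2.
by move: sz1 sz2; rewrite size_iota; lia.
Qed.

End Vertices.

Hypothesis M_gt1 : (1 < M)%N.

Definition acc_set (p : nat) (g : babp) : {set 'Z_M} :=
  [set z : 'Z_M | Zp_to_Fp p z \in [seq (c%:R : 'F_p) | c <- g_acc g]].

Definition compile_gate (g : babp) (src : seq nat) (Ts : seq {set 'Z_M}) (zero one : nat)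
    (c : seq node) : seq node * nat :=
  let ws := g_wires g in
  let r := compile_vertices (g_edges g) (g_nv g).-1 (fun w => nth 0%N src (nth 0%N ws w))
      (fun w => nth set0 Ts (nth 0%N ws w)) zero one (g_nv g) c (fun _ => zero) in
  (r.1, r.2 0%N).

Definition gate_cost (g : babp) : nat := g_nv g * (2 * size (g_edges g)).

Lemma compile_gate_spec p n l g src Ts zero one c prev :
  (l < h.+1)%N -> prime p -> (p %| M)%N ->
  babp_wf g (size prev) -> encodes c src Ts l.+1 prev -> const_nodes c zero one ->
  nodes_ok n c ->
  let r := compile_gate g src Ts zero one c in
  [/\ extends c r.1, nodes_ok n r.1, node_tests r.1 r.2 l (acc_set p g) (babp_out p g prev)
    & (size r.1 <= size c + gate_cost g)%N].
Proof.
move=> l_lt p_prime p_dvd /and3P[nv_gt0 /(all_nthP no_edge) edges_wf /allP wires_wf].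
move=> enc consts ok.
set ws := g_wires g; set s := (g_nv g).-1.
have [||||ext ok1 Hv sz] := @compile_vertices_spec (g_edges g) s
  (fun w => nth 0%N src (nth 0%N ws w)) (fun w => nth set0 Ts (nth 0%N ws w))
  zero one n l (size ws) [seq nth false prev w | w <- ws] c l_lt _ _ consts
  (g_nv g) c (fun _ => zero) _ (extends_refl _) ok.
- move=> i hi; have /and3P[h1 h2 h3] := edges_wf _ hi.
  split=> //; first by rewrite /s -ltnS prednK.
  by case: (edge (g_edges g) i).2 h3.
- move=> w hw; have hk : (nth 0%N ws w < size prev)%N by apply/wires_wf/mem_nth.
  by rewrite (nth_map 0%N) //; apply: enc.
- by rewrite /s prednK.
- by move=> v /andP[h1 h2]; move: (leq_trans h1 h2) nv_gt0; rewrite /s; lia.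
have [lt0 val0] := Hv 0%N (leq0n _).
split=> //; split=> //.
by rewrite val0 /acc_set inE Zp_to_Fp_walk_weight // /s prednK // -walk_sumE.
Qed.

Fixpoint compile_layer (L : seq babp) (src : seq nat) (Ts : seq {set 'Z_M}) (zero one : nat)
    (c : seq node) : seq node * seq nat :=
  if L is g :: L' then
    let r := compile_gate g src Ts zero one c in
    let r' := compile_layer L' src Ts zero one r.1 in (r'.1, r.2 :: r'.2)
  else (c, [::]).

Lemma compile_layer_spec p n l L src Ts zero one c prev :
  (l < h.+1)%N -> prime p -> (p %| M)%N ->
  all (fun g => babp_wf g (size prev)) L -> encodes c src Ts l.+1 prev ->
  const_nodes c zero one -> nodes_ok n c ->
  let r := compile_layer L src Ts zero one c in
  [/\ extends c r.1, nodes_ok n r.1,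
      encodes r.1 r.2 [seq acc_set p g | g <- L] l [seq babp_out p g prev | g <- L]
    & (size r.1 <= size c + \sum_(g <- L) gate_cost g)%N].
Proof.
move=> l_lt p_prime p_dvd; elim: L c => [|g L IH] c /=.
  by move=> _ _ _ ok; rewrite big_nil addn0; split=> //; apply: extends_refl.
move=> /andP[wf_g wf_L] enc consts ok.
have [ext ok1 out sz1] := compile_gate_spec l_lt p_prime p_dvd wf_g enc consts ok.
have [ext' ok2 enc2 sz2] := IH _ wf_L (encodes_extend ext enc)
  (const_nodes_extend ext consts) ok1.
split=> //; first exact: extends_trans ext ext'.
- by case=> [|k] /= hk; [apply: node_tests_extend ext' out | apply: enc2].
- by rewrite big_cons addnA; apply: leq_trans sz2 _; rewrite leq_add2r.
Qed.

Definition eval_levels (b : seq bool) (pl : seq (nat * seq babp)) : seq bool :=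
  foldr (fun pL prev => [seq babp_out pL.1 g prev | g <- pL.2]) b pl.

Fixpoint levels_ok (b : seq bool) (pl : seq (nat * seq babp)) : Prop :=
  if pl is pL :: pl' then
    [/\ prime pL.1, (pL.1 %| M)%N, all (fun g => babp_wf g (size (eval_levels b pl'))) pL.2
      & levels_ok b pl']
  else True.

Definition compile_level (zero one : nat) (pL : nat * seq babp)
    (st : seq node * seq nat * seq {set 'Z_M}) : seq node * seq nat * seq {set 'Z_M} :=
  let r := compile_layer pL.2 st.1.2 st.2 zero one st.1.1 in
  (r.1, r.2, [seq acc_set pL.1 g | g <- pL.2]).

Definition levels_cost (pl : seq (nat * seq babp)) : nat :=
  \sum_(pL <- pl) \sum_(g <- pL.2) gate_cost g.

(* The level read from coordinate [j + 1] is computed in coordinate [j]. *)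
Lemma compile_levels_spec n zero one b pl c src Ts :
  (size pl <= h)%N -> levels_ok b pl -> encodes c src Ts h.+1 b ->
  const_nodes c zero one -> nodes_ok n c ->
  let r := foldr (compile_level zero one) (c, src, Ts) pl in
  [/\ extends c r.1.1, nodes_ok n r.1.1,
      encodes r.1.1 r.1.2 r.2 (h.+1 - size pl) (eval_levels b pl)
    & (size r.1.1 <= size c + levels_cost pl)%N].
Proof.
elim: pl => [|pL pl IH] /=.
  move=> _ _ enc _ ok; rewrite /levels_cost big_nil addn0 subn0.
  by split=> //; apply: extends_refl.
move=> pl_lt [p_prime p_dvd wf_L wf_pl] enc consts ok.
have [ext ok1 enc1 sz1] := IH (ltnW pl_lt) wf_pl enc consts ok.
set r := foldr _ _ _ in ext ok1 enc1 sz1 *.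
have l_lt : (h.+1 - (size pl).+1 < h.+1)%N by rewrite subSS ltnS leq_subr.
have pl_le : (size pl < h.+1)%N := ltnW pl_lt.
rewrite -[(h.+1 - size pl)%N](subnSK pl_le) in enc1.
have [ext' ok2 enc2 sz2] := compile_layer_spec l_lt p_prime p_dvd wf_L enc1
  (const_nodes_extend ext consts) ok1.
split=> //; first exact: extends_trans ext ext'.
by rewrite /levels_cost big_cons; move: sz1 sz2; rewrite /levels_cost; lia.
Qed.

End Compile.

Section WholeCircuit.
Variables (h M : nat).
Hypothesis M_gt1 : (1 < M)%N.
Local Notation A := (layered_alg h M).
Local Notation node := (cnode A).

Definition bit_vec (b : bool) : carrier A := const_vec h (b%:R : 'Z_M).

Definition input_circuit n : seq node :=
  [seq CIn A i | i <- iota 0 n] ++ [:: CConst (const_vec h 0); CConst (const_vec h 1)].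

(* The final test gate copies the output bit of the top gate into coordinate
   [0], so that the accepting set of the NuDFA does not depend on [n]. *)
Definition compile_circuit n (pl : seq (nat * seq babp)) : seq node :=
  let r := foldr (compile_level n n.+1) (input_circuit n, iota 0 n, nseq n [set 1]) pl in
  rcons r.1.1 (CGate (test_sym h (nth set0 r.2 0)) [:: n.+1; nth 0%N r.1.2 0]).

Lemma size_input_circuit n : size (input_circuit n) = n.+2.
Proof. by rewrite size_cat size_map size_iota addn2. Qed.

Lemma nth_input_circuit n k : nth (CIn A 0) (input_circuit n) k =
  if (k < n)%N then CIn A k else if k == n then CConst (const_vec h 0)
  else if k == n.+1 then CConst (const_vec h 1) else CIn A 0.
Proof.
rewrite nth_cat size_map size_iota; case: ltnP => hk.
  by rewrite (nth_map 0%N) ?size_iota // nth_iota.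
have [->|ne] := eqVneq k n; first by rewrite subnn.
have [->|ne'] := eqVneq k n.+1; first by rewrite subSn // subnn.
by rewrite nth_default //=; move: hk ne ne' => /= hk /eqP ne /eqP ne'; lia.
Qed.

Lemma input_circuit_ok n : nodes_ok n (input_circuit n).
Proof.
move=> k; rewrite size_input_circuit nth_input_circuit => hk; case: ltnP => [//|h1].
by case: eqP => // /eqP e1; case: eqP => // /eqP e2; move: hk h1 e1 e2; lia.
Qed.

Variable b : seq bool.
Local Notation x := (map bit_vec b).
Local Notation value := (node_value (const_vec h 0) x).

Lemma value_input_circuit k : (k < (size b).+2)%N ->
  value (input_circuit (size b)) k = source_value (const_vec h 0) x (nth (CIn A 0) (input_circuit (size b)) k).
Proof.
move=> hk; rewrite /node_value circuit_vals_sources; last first.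
  by rewrite all_cat all_map; apply/andP; split=> //; apply/allP.
by rewrite (nth_map (CIn A 0)) // size_input_circuit.
Qed.

Lemma input_circuit_consts : const_nodes x (input_circuit (size b)) (size b) (size b).+1.
Proof.
split; rewrite ?size_input_circuit // value_input_circuit // nth_input_circuit.
  by rewrite ltnn eqxx.
by rewrite ltnNge leqnSn /= (gtn_eqF (ltnSn _)) eqxx.
Qed.

Lemma bool_natr_eq1 (c : bool) : ((c%:R : 'Z_M) == 1) = c.
Proof. by case: c => //=; rewrite eq_sym oner_eq0. Qed.

Lemma input_circuit_encodes :
  encodes x (input_circuit (size b)) (iota 0 (size b)) (nseq (size b) [set 1]) h.+1 b.
Proof.
move=> k hk; rewrite nth_iota // add0n nth_nseq hk.
have hk2 : (k < (size b).+2)%N by rewrite ltnW // ltnW.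
split; first by rewrite size_input_circuit.
rewrite value_input_circuit // nth_input_circuit hk /=.
by rewrite (nth_map false) // ffunE inE bool_natr_eq1.
Qed.

Lemma compile_circuit_spec pl :
  size pl = h -> levels_ok M b pl -> (0 < size (eval_levels b pl))%N ->
  let c := compile_circuit (size b) pl in
  [/\ nodes_ok (size b) c, (size c <= size b + 3 + levels_cost pl)%N &
      (value c (size c).-1 (inord 0) == 1) = nth false (eval_levels b pl) 0].
Proof.
move=> size_pl wf_pl out_gt0.
have [ext ok enc sz] := compile_levels_spec M_gt1 (eq_leq size_pl) wf_pl input_circuit_encodes
  input_circuit_consts (@input_circuit_ok (size b)).
rewrite /compile_circuit; set r := foldr _ _ _ in ext ok enc sz *.
rewrite size_pl subSnn in enc.
have [hr hbit] := enc 0%N out_gt0.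
have [_ one_lt _ one_val] := const_nodes_extend ext input_circuit_consts.
split.
- by apply: nodes_ok_rcons => //=; rewrite one_lt hr.
- rewrite size_rcons; apply: leq_ltn_trans sz _.
  by rewrite size_input_circuit ltn_add2r addn3.
- rewrite size_rcons /= value_test test_mulE // one_val ffunE mul1r bool_natr_eq1.
  exact: hbit.
Qed.

End WholeCircuit.

(** * Size bounds *)

Lemma circuit_size_le h M n (c : seq (cnode (layered_alg h M))) :
  nodes_ok n c -> (circuit_size c <= 4 * size c)%N.
Proof.
move=> ok; rewrite /circuit_size (big_nth (CIn _ 0)) big_seq.
apply: (@leq_trans (size c + \sum_(i <- index_iota 0 (size c) | i \in index_iota 0 (size c)) 3)).
  rewrite leq_add2l; apply: leq_sum => i; rewrite mem_index_iota => /andP[_ hi].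
  by have := ok i hi; case: (nth _ c i) => //= s ch /andP[/eqP -> _]; case: s => [[]|].
by rewrite -big_seq sum_nat_const_nat subn0 mulnC -mulSn.
Qed.

Lemma sum_sqr_le (I : Type) (s : seq I) (f : I -> nat) :
  (\sum_(i <- s) f i ^ 2 <= (\sum_(i <- s) f i) ^ 2)%N.
Proof.
elim: s => [|a s IH]; first by rewrite !big_nil.
by rewrite !big_cons sqrnD -addnA leq_add2l (leq_trans IH) ?leq_addr.
Qed.

Lemma gate_cost_le g : (gate_cost g <= 2 * (babp_size g + size (g_wires g)) ^ 2)%N.
Proof.
rewrite /gate_cost /babp_size mulnCA leq_mul2l /= expnS expn1.
by apply: leq_mul; lia.
Qed.

Lemma levels_cost_le pl : (levels_cost pl <= 2 * layered_size (unzip2 pl) ^ 2)%N.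
Proof.
rewrite /levels_cost /layered_size big_map.
set a := fun g => (babp_size g + size (g_wires g))%N.
apply: (@leq_trans (\sum_(pL <- pl) 2 * (\sum_(g <- pL.2) a g) ^ 2)).
  apply: leq_sum => pL _.
  apply: (@leq_trans (\sum_(g <- pL.2) 2 * a g ^ 2)); first by apply: leq_sum => g _; apply: gate_cost_le.
  by rewrite -big_distrr leq_mul2l /= sum_sqr_le.
by rewrite -big_distrr leq_mul2l /= (sum_sqr_le _ (fun pL => \sum_(g <- pL.2) a g)).
Qed.

Lemma poly_bound n e LS N : (0 < n)%N -> (LS <= e * n ^ e + e)%N ->
  (N <= 4 * (n + 3 + 2 * LS ^ 2))%N ->
  (N <= (32 * e ^ 2 + 2 * e + 16) * n ^ (32 * e ^ 2 + 2 * e + 16)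
         + (32 * e ^ 2 + 2 * e + 16))%N.
Proof.
move=> n0 hLS hN; set e' := (32 * e ^ 2 + 2 * e + 16)%N.
have P1 : (1 <= n ^ e)%N by rewrite expn_gt0 n0.
have L1 : (LS <= 2 * e * n ^ e)%N by apply: leq_trans hLS _; nia.
have Q : (n ^ e * n ^ e <= n ^ e')%N by rewrite -expnD leq_pexp2l // /e'; nia.
have R : (n <= n ^ e')%N by rewrite -{1}(expn1 n) leq_pexp2l // /e'; lia.
have L2 : (LS ^ 2 <= 4 * e ^ 2 * n ^ e')%N.
  apply: (@leq_trans ((2 * e * n ^ e) ^ 2)); first by rewrite leq_exp2r.
  by rewrite expnMn expnMn leq_mul.
have L3 : (N <= 4 * n + 12 + 32 * e ^ 2 * n ^ e')%N by apply: leq_trans hN _; nia.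
have : (32 * e ^ 2 * n ^ e' + 4 * n ^ e' <= e' * n ^ e')%N.
  by rewrite -mulnDl leq_mul2r /e'; apply/orP; right; lia.
by move: L3; nia.
Qed.

Lemma prod_primes_gt1 (ps : seq nat) :
  (0 < size ps)%N -> all prime ps -> (1 < \prod_(p <- ps) p)%N.
Proof.
case: ps => // p s _ /andP[p_prime /allP s_prime]; rewrite big_cons.
have pos : (0 < \prod_(q <- s) q)%N.
  by rewrite big_seq_cond prodn_cond_gt0 // => q /andP[/s_prime /prime_gt0].
by apply: leq_trans (prime_gt1 p_prime) _; rewrite leq_pmulr.
Qed.

Lemma size_eval_levels b qs Ls : size qs = size Ls ->
  size (eval_levels b (zip qs Ls)) = if Ls is L :: _ then size L else size b.
Proof. by case: qs Ls => [|q qs] [|L Ls] //= _; rewrite size_map. Qed.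

Lemma levels_ok_zip M b qs Ls : size qs = size Ls -> all prime qs -> all (dvdn^~ M) qs ->
  (forall i, (i < size Ls)%N -> all (fun g => babp_wf g
     (if (i.+1 < size Ls)%N then size (nth [::] Ls i.+1) else size b)) (nth [::] Ls i)) ->
  levels_ok M b (zip qs Ls).
Proof.
elim: qs Ls => [|q qs IH] [|L Ls] //= [size_eq] /andP[q_prime qs_prime] /andP[q_dvd qs_dvd] wf.
split=> //.
- by have := wf 0%N isT; rewrite /= size_eval_levels //; case: Ls {IH wf} size_eq.
- by apply: IH => // i hi; apply: (wf i.+1).
Qed.

Section Main.
Variable ps : seq nat.
Hypotheses (ps_gt0 : (0 < size ps)%N) (ps_prime : all prime ps).
Local Notation M := (\prod_(p <- ps) p)%N.
Local Notation A := (layered_alg (size ps) M).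
Local Notation compile n C := (compile_circuit (size ps) M n (zip ps C)).

Lemma compile_layered_spec (C : seq (seq babp)) b : layered_wf ps (size b) C ->
  let c := compile (size b) C in
  [/\ nodes_ok (size b) c, (size c <= size b + 3 + 2 * layered_size C ^ 2)%N &
      (node_value (const_vec _ 0) (map (bit_vec (size ps) M) b) c (size c).-1 (inord 0) == 1)
        = layered_eval ps C b].
Proof.
move=> [size_C [head_C wf_C]].
have size_zip : size (zip ps C) = size ps by rewrite size_zip size_C minnn.
have M_dvd : all (dvdn^~ M) ps by apply/allP => p hp; rewrite (big_rem p) //= dvdn_mulr.
have out_gt0 : (0 < size (eval_levels b (zip ps C)))%N.
  rewrite size_eval_levels //; case: C size_C head_C {wf_C size_zip} => [|L Ls] /=.
    by move=> e; move: ps_gt0; rewrite -e.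
  by move=> _ ->.
have [ok sz out] := compile_circuit_spec (prod_primes_gt1 ps_gt0 ps_prime) size_zip
  (levels_ok_zip (esym size_C) ps_prime M_dvd wf_C) out_gt0.
split=> //; apply: leq_trans sz _; rewrite leq_add2l.
by have := levels_cost_le (zip ps C); rewrite unzip2_zip ?size_C.
Qed.

Lemma bit_vec_false : bit_vec (size ps) M false = const_vec _ 0.
Proof. by apply/ffunP => i; rewrite !ffunE. Qed.

Lemma nuDet_sub_nuP L : in_nuDet ps L -> in_nuP A L.
Proof.
move=> [C [e HC]].
exists (fun n => compile n (C n)), (bit_vec (size ps) M),
  [set v : carrier A | v (inord 0) == 1], (32 * e ^ 2 + 2 * e + 16)%N.
split=> [n n_gt0 | b b_gt0].
- have [wf_C [size_C _]] := HC n.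
  have := @compile_layered_spec (C n) (nseq n false).
  rewrite size_nseq => /(_ wf_C) [ok sz _].
  split; first by split; rewrite // size_rcons.
  apply: (poly_bound n_gt0 size_C); apply: leq_trans (circuit_size_le ok) _.
  by rewrite leq_mul2l.
- have [wf_C [_ eval_C]] := HC (size b).
  have [_ _ out] := compile_layered_spec wf_C.
  by rewrite eval_C // -out inE bit_vec_false circuit_evalE.
Qed.

End Main.

Close Scope ring_scope.

Theorem mainTheorem10 (ps : seq nat) :
  0 < size ps -> all prime ps ->
  exists A : finAlgebra,
    solvable_alg A /\ has_malcev A /\
    forall L : seq bool -> bool, in_nuDet ps L -> in_nuP A L.
Proof.
move=> ps_gt0 ps_prime; exists (layered_alg (size ps) (\prod_(p <- ps) p)).
split; first exact: layered_alg_solvable.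
split; first exact: layered_alg_malcev.
exact: nuDet_sub_nuP.
Qed.
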